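(* Let $\langle X,d\rangle$ be a metric space. The following conditions are equivalent: (1) $X$ is cofinally Bourbaki quasi-complete; (2) $X$ is strongly uniformly locally bounded and, for every nowhere-vanishing real-valued strongly uniformly locally Lipschitz function $f$ on $X$, the reciprocal $1/f$ is strongly uniformly locally Lipschitz; (3) $X$ is strongly uniformly locally bounded and, for every nowhere-vanishing real-valued Lipschitz function $f$ on $X$, the reciprocal $1/f$ is strongly uniformly locally Lipschitz.
   Context: For $\varepsilon>0$, an $\varepsilon$-chain joining $x,y\in X$ is a finite sequence $x=x_0,\dots,x_n=y$ with $d(x_{i-1},x_i)<\varepsilon$. $S^\infty_d(x,\varepsilon)$ denotes the set of points of $X$ joinable to $x$ by an $\varepsilon$-chain. A sequence $\langle x_n\rangle$ is cofinally Bourbaki quasi-Cauchy if for every $\varepsilon>0$ there is an infinite $N_\varepsilon\subseteq\mathbb{N}$ such that any $x_j,x_k$ with $j,k\in N_\varepsilon$ can be joined by an $\varepsilon$-chain; $X$ is cofinally Bourbaki quasi-complete if every such sequence has a cluster point. $X$ is strongly uniformly locally bounded if there is $\delta>0$ such that $S^\infty_d(x,\delta)$ is bounded for all $x\in X$. A function $f:X\to\mathbb{R}$ is strongly uniformly locally Lipschitz (uniformly locally chain-Lipschitz) if there is $\delta>0$ such that for each $x\in X$ the restriction of $f$ to $S^\infty_d(x,\delta)$ is Lipschitz (constant may depend on $x$). *)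

From Stdlib Require Import Reals.
Open Scope R_scope.

Definition is_metric {X : Type} (d : X -> X -> R) : Prop :=
  (forall x y, 0 <= d x y) /\
  (forall x y, d x y = 0 <-> x = y) /\
  (forall x y, d x y = d y x) /\
  (forall x y z, d x z <= d x y + d y z).

Definition eps_chain {X : Type} (d : X -> X -> R) (eps : R) (x y : X) : Prop :=
  exists (n : nat) (s : nat -> X),
    s 0%nat = x /\ s n = y /\ (forall i, (i < n)%nat -> d (s i) (s (S i)) < eps).

Definition S_inf {X : Type} (d : X -> X -> R) (x : X) (eps : R) : X -> Prop :=
  fun y => eps_chain d eps x y.

Definition infinite_nat (N : nat -> Prop) : Prop :=
  forall m : nat, exists n : nat, (m <= n)%nat /\ N n.

Definition cofinally_BQC {X : Type} (d : X -> X -> R) (x : nat -> X) : Prop :=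
  forall eps, 0 < eps ->
    exists N : nat -> Prop, infinite_nat N /\
      forall j k, N j -> N k -> eps_chain d eps (x j) (x k).

Definition cluster_point {X : Type} (d : X -> X -> R) (x : nat -> X) (p : X) : Prop :=
  forall eps, 0 < eps -> forall m : nat, exists n : nat, (m <= n)%nat /\ d (x n) p < eps.

Definition cofinally_Bourbaki_quasi_complete {X : Type} (d : X -> X -> R) : Prop :=
  forall x : nat -> X, cofinally_BQC d x -> exists p, cluster_point d x p.

Definition bounded_set {X : Type} (d : X -> X -> R) (A : X -> Prop) : Prop :=
  exists r : R, forall y z, A y -> A z -> d y z <= r.

Definition strongly_uniformly_locally_bounded {X : Type} (d : X -> X -> R) : Prop :=
  exists delta, 0 < delta /\ forall x, bounded_set d (S_inf d x delta).

Definition lipschitz_on {X : Type} (d : X -> X -> R) (A : X -> Prop) (f : X -> R) : Prop :=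
  exists K : R, 0 <= K /\ forall y z, A y -> A z -> Rabs (f y - f z) <= K * d y z.

Definition lipschitz {X : Type} (d : X -> X -> R) (f : X -> R) : Prop :=
  lipschitz_on d (fun _ => True) f.

Definition strongly_uniformly_locally_lipschitz {X : Type} (d : X -> X -> R) (f : X -> R) : Prop :=
  exists delta, 0 < delta /\ forall x, lipschitz_on d (S_inf d x delta) f.

(* Quasi-completeness means: a sequence which, for every eps, returns infinitely
   often to a single eps-chain component has a cluster point.  Interleaving
   witnesses taken in components of scales 1/(k+1) produces such sequences;
   choosing them to escape to infinity, or to make |f| tend to 0, shows that
   X is strongly uniformly locally bounded and that a nowhere-vanishing
   continuous f is bounded away from 0 on the components of a fixed scale,
   where 1/f is then Lipschitz.  Conversely, if a cofinally Bourbaki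
   quasi-Cauchy sequence (x_n) has no cluster point, then
   f(x) = inf_n (d(x, x_n) + 1/(n+1)) is positive and 1-Lipschitz, while
   1/f(x_n) >= n+1 is unbounded on one chain component; but a strongly
   uniformly locally Lipschitz function is bounded on the components of small
   scale of a strongly uniformly locally bounded space. *)

From Stdlib Require Import Reals Lra Lia ClassicalChoice Classical.
Open Scope R_scope.

Lemma inv_INR_S_pos (n : nat) : 0 < / INR (S n).
Proof. apply Rinv_0_lt_compat, lt_0_INR; lia. Qed.

Lemma inv_INR_S_le (m n : nat) : (m <= n)%nat -> / INR (S n) <= / INR (S m).
Proof.
  intro Hmn. apply Rinv_le_contravar; [apply lt_0_INR; lia | apply le_INR; lia].
Qed.

Lemma inv_INR_S_lt (eps : R) : 0 < eps -> exists k, / INR (S k) < eps.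
Proof.
  intro Heps. destruct (archimed_cor1 eps Heps) as [[|k] [Hk Hpos]]; [lia|].
  now exists k.
Qed.

Lemma inf_seq_exists (u : nat -> R) (b : R) :
  (forall n, b <= u n) ->
  exists m, (forall n, m <= u n) /\ (forall c, (forall n, c <= u n) -> c <= m).
Proof.
  intro Hb.
  set (E := fun r => exists n, r = - u n).
  assert (HE : bound E).
  { exists (- b). intros r [n ->]. specialize (Hb n). lra. }
  destruct (completeness E HE (ex_intro _ (- u 0%nat) (ex_intro _ 0%nat eq_refl)))
    as [l [Hup Hleast]].
  exists (- l). split.
  - intro n. assert (E (- u n)) as Hn by now exists n.
    specialize (Hup _ Hn). lra.
  - intros c Hc. enough (l <= - c) by lra.
    apply Hleast. intros r [n ->]. specialize (Hc n). lra.
Qed.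

Definition sqrt_rem (n : nat) : nat := (n - Nat.sqrt n * Nat.sqrt n)%nat.

Lemma sqrt_rem_cofinal (k m : nat) : exists n, (m <= n)%nat /\ sqrt_rem n = k.
Proof.
  exists ((m + k) * (m + k) + k)%nat. split; [nia|].
  unfold sqrt_rem. rewrite (Nat.sqrt_unique _ (m + k)); [lia|].
  split; simpl; nia.
Qed.

Section Chains.
Context {X : Type} (d : X -> X -> R).
Hypothesis Hd : is_metric d.

Lemma eps_chain_refl eps x : eps_chain d eps x x.
Proof. exists 0%nat, (fun _ => x). repeat split; intros; lia. Qed.

Lemma eps_chain_step eps x y : d x y < eps -> eps_chain d eps x y.
Proof.
  intro Hxy. exists 1%nat, (fun i => match i with 0%nat => x | _ => y end).
  repeat split. intros i Hi. now replace i with 0%nat by lia.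
Qed.

Lemma eps_chain_mono eps1 eps2 x y :
  eps1 <= eps2 -> eps_chain d eps1 x y -> eps_chain d eps2 x y.
Proof.
  intros Heps [n [s [H0 [Hn Hs]]]]. exists n, s. repeat split; auto.
  intros i Hi. specialize (Hs i Hi). lra.
Qed.

Lemma eps_chain_sym eps x y : eps_chain d eps x y -> eps_chain d eps y x.
Proof.
  destruct Hd as [_ [_ [Hsym _]]].
  intros [n [s [H0 [Hn Hs]]]]. exists n, (fun i => s (n - i)%nat). repeat split.
  - now rewrite Nat.sub_0_r.
  - now rewrite Nat.sub_diag.
  - intros i Hi. replace (n - i)%nat with (S (n - S i)) by lia.
    rewrite Hsym. apply Hs. lia.
Qed.

Lemma eps_chain_trans eps x y z :
  eps_chain d eps x y -> eps_chain d eps y z -> eps_chain d eps x z.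
Proof.
  intros [n1 [s1 [H10 [H1n H1s]]]] [n2 [s2 [H20 [H2n H2s]]]].
  exists (n1 + n2)%nat, (fun i => if Nat.leb i n1 then s1 i else s2 (i - n1)%nat).
  repeat split.
  - easy.
  - destruct (Nat.leb_spec (n1 + n2) n1).
    + replace n2 with 0%nat in * by lia. now rewrite Nat.add_0_r, H1n, <- H2n, H20.
    + rewrite <- H2n. f_equal. lia.
  - intros i Hi.
    destruct (Nat.leb_spec i n1), (Nat.leb_spec (S i) n1); try lia.
    + apply H1s. lia.
    + replace i with n1 by lia. rewrite H1n, <- H20.
      replace (S n1 - n1)%nat with 1%nat by lia. apply H2s. lia.
    + replace (S i - n1)%nat with (S (i - n1)) by lia. apply H2s. lia.
Qed.

Lemma interleaved_cofinally_BQC (z y : nat -> X) :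
  (forall n, S_inf d (z (sqrt_rem n)) (/ INR (S (sqrt_rem n))) (y n)) ->
  cofinally_BQC d y.
Proof.
  intros Hy eps Heps. destruct (inv_INR_S_lt eps Heps) as [k Hk].
  exists (fun n => sqrt_rem n = k). split.
  - intro m. destruct (sqrt_rem_cofinal k m) as [n Hn]. now exists n.
  - intros i j Hi Hj. pose proof (Hy i) as Hyi. pose proof (Hy j) as Hyj.
    rewrite Hi in Hyi. rewrite Hj in Hyj.
    apply (eps_chain_mono (/ INR (S k))); [lra|].
    apply (eps_chain_trans _ _ (z k)); [apply eps_chain_sym|]; assumption.
Qed.

Lemma quasi_complete_select (P : nat -> X -> Prop) :
  cofinally_Bourbaki_quasi_complete d ->
  (forall eps, 0 < eps -> exists z, forall n, exists y, S_inf d z eps y /\ P n y) ->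
  exists (y : nat -> X) p, (forall n, P n (y n)) /\ cluster_point d y p.
Proof.
  intros Hc Hcomp.
  destruct (choice (fun k z => forall n, exists y, S_inf d z (/ INR (S k)) y /\ P n y))
    as [z Hz].
  { intro k. exact (Hcomp _ (inv_INR_S_pos k)). }
  destruct (choice (fun n y => S_inf d (z (sqrt_rem n)) (/ INR (S (sqrt_rem n))) y /\ P n y))
    as [y Hy].
  { intro n. exact (Hz (sqrt_rem n) n). }
  destruct (Hc y) as [p Hp].
  { apply (interleaved_cofinally_BQC z). intro n. apply Hy. }
  exists y, p. split; [intro n; apply Hy | exact Hp].
Qed.

End Chains.

Section Boundedness.
Context {X : Type} (d : X -> X -> R).
Hypothesis Hd : is_metric d.

Lemma unbounded_far (A : X -> Prop) (w : X) (r : R) :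
  ~ bounded_set d A -> exists y, A y /\ r < d y w.
Proof.
  destruct Hd as [_ [_ [Hsym Htri]]].
  intro Hunb. apply NNPP. intro Hnear. apply Hunb. exists (2 * r).
  intros y z Hy Hz.
  assert (d y w <= r) by (apply Rnot_lt_le; intro; apply Hnear; now exists y).
  assert (d z w <= r) by (apply Rnot_lt_le; intro; apply Hnear; now exists z).
  specialize (Htri y w z). rewrite (Hsym w z) in Htri. lra.
Qed.

Lemma quasi_complete_locally_bounded :
  cofinally_Bourbaki_quasi_complete d -> strongly_uniformly_locally_bounded d.
Proof.
  intro Hc. pose proof Hd as [_ [_ [_ Htri]]].
  apply NNPP. intro Hunb.
  assert (exists w : X, True) as [w _].
  { apply NNPP. intro Hempty. apply Hunb. exists 1. split; [lra|].
    intro x. exfalso. apply Hempty. now exists x. }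
  destruct (quasi_complete_select d Hd (fun n y => INR n < d y w) Hc)
    as [y [p [Hfar Hp]]].
  { intros eps Heps. apply NNPP. intro Hno. apply Hunb. exists eps. split; [lra|].
    intro z. apply NNPP. intro Hz. apply Hno. exists z. intro n.
    now apply unbounded_far. }
  destruct (INR_unbounded (d p w + 1)) as [m Hm].
  destruct (Hp 1 ltac:(lra) m) as [n [Hmn Hn]].
  specialize (Hfar n). apply le_INR in Hmn. specialize (Htri (y n) p w). lra.
Qed.

Lemma locally_lipschitz_bounded_on_components (g : X -> R) :
  strongly_uniformly_locally_bounded d -> strongly_uniformly_locally_lipschitz d g ->
  exists delta, 0 < delta /\ forall x, exists M, forall y, S_inf d x delta y -> g y <= M.
Proof.
  intros [db [Hdb Hb]] [dl [Hdl Hl]].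
  exists (Rmin dl db). split; [now apply Rmin_pos|].
  intro x. destruct (Hl x) as [K [HK HK2]]. destruct (Hb x) as [r Hr].
  exists (g x + K * r). intros y Hy.
  specialize (HK2 y x (eps_chain_mono d _ _ _ _ (Rmin_l _ _) Hy) (eps_chain_refl d _ _)).
  specialize (Hr y x (eps_chain_mono d _ _ _ _ (Rmin_r _ _) Hy) (eps_chain_refl d _ _)).
  pose proof (Rle_abs (g y - g x)).
  assert (K * d y x <= K * r) by (apply Rmult_le_compat_l; lra).
  lra.
Qed.

End Boundedness.

Definition metric_continuous {X : Type} (d : X -> X -> R) (f : X -> R) : Prop :=
  forall p eps, 0 < eps ->
    exists delta, 0 < delta /\ forall y, d y p < delta -> Rabs (f y - f p) < eps.

Lemma lipschitz_on_sub {X : Type} (d : X -> X -> R) (A B : X -> Prop) (f : X -> R) :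
  (forall y, A y -> B y) -> lipschitz_on d B f -> lipschitz_on d A f.
Proof. intros HAB [K [HK HL]]. exists K. split; auto. Qed.

Lemma lipschitz_on_inv {X : Type} (d : X -> X -> R) (A : X -> Prop) (f : X -> R) (c : R) :
  0 < c -> (forall y, A y -> c <= Rabs (f y)) ->
  lipschitz_on d A f -> lipschitz_on d A (fun x => / f x).
Proof.
  intros Hc Hfc [K [HK HL]]. exists (K / (c * c)). split.
  { apply Rmult_le_pos; [lra|]. left. apply Rinv_0_lt_compat. nra. }
  intros y z Hy Hz.
  specialize (HL y z Hy Hz). pose proof (Hfc y Hy). pose proof (Hfc z Hz).
  assert (f y <> 0) by (intro E; rewrite E, Rabs_R0 in *; lra).
  assert (f z <> 0) by (intro E; rewrite E, Rabs_R0 in *; lra).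
  replace (/ f y - / f z) with ((f z - f y) * / (f y * f z)) by (field; auto).
  rewrite Rabs_mult, Rabs_inv, Rabs_mult, Rabs_minus_sym.
  replace (K / (c * c) * d y z) with (K * d y z * / (c * c)) by (field; lra).
  apply Rmult_le_compat; auto using Rabs_pos.
  - left. apply Rinv_0_lt_compat, Rmult_lt_0_compat; now apply Rabs_pos_lt.
  - apply Rinv_le_contravar; [nra|]. apply Rmult_le_compat; lra.
Qed.

Lemma lipschitz_locally_lipschitz {X : Type} (d : X -> X -> R) (f : X -> R) :
  lipschitz d f -> strongly_uniformly_locally_lipschitz d f.
Proof.
  intros [K [HK HL]]. exists 1. split; [lra|]. intro x. exists K. split; auto.
Qed.

Section ReciprocalLipschitz.
Context {X : Type} (d : X -> X -> R).
Hypothesis Hd : is_metric d.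

Lemma locally_lipschitz_continuous (f : X -> R) :
  strongly_uniformly_locally_lipschitz d f -> metric_continuous d f.
Proof.
  destruct Hd as [_ [_ [Hsym _]]].
  intros [df [Hdf Hf]] p eps Heps. destruct (Hf p) as [K [HK HL]].
  exists (Rmin df (eps / (K + 1))). split.
  { apply Rmin_pos; [lra|]. apply Rdiv_lt_0_compat; lra. }
  intros y Hy.
  pose proof (Rmin_l df (eps / (K + 1))). pose proof (Rmin_r df (eps / (K + 1))).
  assert (Hyp : S_inf d p df y) by (apply eps_chain_step; rewrite Hsym; lra).
  specialize (HL y p Hyp (eps_chain_refl d _ _)).
  assert (K * d y p <= K * (eps / (K + 1))) by (apply Rmult_le_compat_l; lra).
  assert (K * (eps / (K + 1)) < eps).
  { apply (Rmult_lt_reg_r (K + 1)); [lra|]. field_simplify; lra. }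
  lra.
Qed.

Lemma quasi_complete_bounded_away (f : X -> R) :
  cofinally_Bourbaki_quasi_complete d -> metric_continuous d f -> (forall x, f x <> 0) ->
  exists delta, 0 < delta /\
    forall x, exists c, 0 < c /\ forall y, S_inf d x delta y -> c <= Rabs (f y).
Proof.
  intros Hc Hcont Hf0. apply NNPP. intro Hno.
  destruct (quasi_complete_select d Hd (fun n y => Rabs (f y) < / INR (S n)) Hc)
    as [y [p [Hsmall Hp]]].
  { intros eps Heps. apply NNPP. intro Hcomp. apply Hno. exists eps. split; [lra|].
    intro z. apply NNPP. intro Hz. apply Hcomp. exists z. intro n.
    apply NNPP. intro Hy. apply Hz. exists (/ INR (S n)). split; [apply inv_INR_S_pos|].
    intros y1 Hy1. apply Rnot_lt_le. intro. apply Hy. now exists y1. }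
  set (a := Rabs (f p)). assert (0 < a) by now apply Rabs_pos_lt.
  destruct (Hcont p (a / 2) ltac:(lra)) as [delta [Hdelta Hclose]].
  destruct (inv_INR_S_lt (a / 2) ltac:(lra)) as [k Hk].
  destruct (Hp delta Hdelta k) as [n [Hkn Hn]].
  specialize (Hclose _ Hn). specialize (Hsmall n).
  pose proof (inv_INR_S_le k n Hkn).
  pose proof (Rabs_triang_inv (f p) (f (y n))) as Htri.
  rewrite Rabs_minus_sym in Htri. fold a in Htri. lra.
Qed.

Lemma quasi_complete_inv_locally_lipschitz (f : X -> R) :
  cofinally_Bourbaki_quasi_complete d -> (forall x, f x <> 0) ->
  strongly_uniformly_locally_lipschitz d f ->
  strongly_uniformly_locally_lipschitz d (fun x => / f x).
Proof.
  intros Hc Hf0 Hf.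
  destruct (quasi_complete_bounded_away f Hc (locally_lipschitz_continuous f Hf) Hf0)
    as [d0 [Hd0 Haway]].
  destruct Hf as [df [Hdf Hf]].
  exists (Rmin df d0). split; [now apply Rmin_pos|].
  intro x. destruct (Haway x) as [c [Hc0 Hcx]].
  apply (lipschitz_on_inv d _ f c Hc0).
  - intros y Hy. apply Hcx. exact (eps_chain_mono d _ _ _ _ (Rmin_r _ _) Hy).
  - apply (lipschitz_on_sub d _ (S_inf d x df)); [|apply Hf].
    intros y Hy. exact (eps_chain_mono d _ _ _ _ (Rmin_l _ _) Hy).
Qed.

End ReciprocalLipschitz.

Section DistanceToSequence.
Context {X : Type} (d : X -> X -> R) (xs : nat -> X) (f : X -> R).
Hypothesis Hd : is_metric d.
Hypothesis f_le : forall x n, f x <= d x (xs n) + / INR (S n).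
Hypothesis f_glb : forall x c, (forall n, c <= d x (xs n) + / INR (S n)) -> c <= f x.

Lemma dist_seq_lipschitz : lipschitz d f.
Proof.
  destruct Hd as [_ [_ [Hsym Htri]]].
  assert (Hle : forall x y, f x <= f y + d x y).
  { intros x y. enough (f x - d x y <= f y) by lra. apply f_glb. intro n.
    specialize (f_le x n). specialize (Htri x y (xs n)). lra. }
  exists 1. split; [lra|]. intros y z _ _. apply Rabs_le.
  pose proof (Hle y z). pose proof (Hle z y). rewrite (Hsym z y) in *. lra.
Qed.

Lemma dist_seq_pos x : ~ cluster_point d xs x -> 0 < f x.
Proof.
  destruct Hd as [Hnn [_ [Hsym _]]].
  intro Hx. apply NNPP. intro Hf. apply Hx. intros e He m. apply NNPP. intro Hfar.
  apply Hf. apply (Rlt_le_trans _ (Rmin e (/ INR (S m)))).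
  { apply Rmin_pos; [lra | apply inv_INR_S_pos]. }
  apply f_glb. intro n. pose proof (inv_INR_S_pos n).
  destruct (Nat.le_gt_cases m n) as [Hmn|Hnm].
  - assert (e <= d (xs n) x) by (apply Rnot_lt_le; intro; apply Hfar; now exists n).
    rewrite Hsym. pose proof (Rmin_l e (/ INR (S m))). lra.
  - pose proof (inv_INR_S_le n m ltac:(lia)). pose proof (Hnn x (xs n)).
    pose proof (Rmin_r e (/ INR (S m))). lra.
Qed.

Lemma dist_seq_at n : f (xs n) <= / INR (S n).
Proof.
  destruct Hd as [_ [Hzero _]].
  specialize (f_le (xs n) n). rewrite (proj2 (Hzero _ _) eq_refl) in f_le. lra.
Qed.

End DistanceToSequence.

Lemma quasi_complete_of_inv_locally_lipschitz {X : Type} (d : X -> X -> R) :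
  is_metric d -> strongly_uniformly_locally_bounded d ->
  (forall f : X -> R, (forall x, f x <> 0) -> lipschitz d f ->
     strongly_uniformly_locally_lipschitz d (fun x => / f x)) ->
  cofinally_Bourbaki_quasi_complete d.
Proof.
  intros Hd Hb Hinv xs Hxs. pose proof Hd as [Hnn _].
  apply NNPP. intro Hncl.
  destruct (choice (fun x m => (forall n, m <= d x (xs n) + / INR (S n)) /\
                      forall c, (forall n, c <= d x (xs n) + / INR (S n)) -> c <= m))
    as [f Hf].
  { intro x. apply (inf_seq_exists _ 0). intro n.
    pose proof (Hnn x (xs n)). pose proof (inv_INR_S_pos n). lra. }
  assert (Hpos : forall x, 0 < f x).
  { intro x. apply (dist_seq_pos d xs f Hd); try apply Hf.
    intro Hx. apply Hncl. now exists x. }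
  destruct (locally_lipschitz_bounded_on_components d (fun x => / f x) Hb)
    as [delta [Hdelta Hbnd]].
  { apply Hinv; [intro x; specialize (Hpos x); lra|].
    apply (dist_seq_lipschitz d xs f Hd); apply Hf. }
  destruct (Hxs delta Hdelta) as [N [Ninf Nchain]].
  destruct (Ninf 0%nat) as [j0 [_ Nj0]].
  destruct (Hbnd (xs j0)) as [M HM].
  destruct (INR_unbounded M) as [m Hm].
  destruct (Ninf m) as [n [Hmn Nn]].
  specialize (HM _ (Nchain j0 n Nj0 Nn)).
  assert (Hlarge : INR (S n) <= / f (xs n)).
  { rewrite <- (Rinv_inv (INR (S n))). apply Rinv_le_contravar; [apply Hpos|].
    apply (dist_seq_at d xs f Hd); apply Hf. }
  apply le_INR in Hmn. rewrite S_INR in Hlarge. lra.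
Qed.

Theorem mainTheorem4 (X : Type) (d : X -> X -> R) (Hd : is_metric d) :
  (cofinally_Bourbaki_quasi_complete d <->
     (strongly_uniformly_locally_bounded d /\
      forall f : X -> R, (forall x, f x <> 0) ->
        strongly_uniformly_locally_lipschitz d f ->
        strongly_uniformly_locally_lipschitz d (fun x => / f x)))
  /\
  (cofinally_Bourbaki_quasi_complete d <->
     (strongly_uniformly_locally_bounded d /\
      forall f : X -> R, (forall x, f x <> 0) ->
        lipschitz d f ->
        strongly_uniformly_locally_lipschitz d (fun x => / f x))).
Proof.
  split; split.
  - intro Hc. split; [now apply quasi_complete_locally_bounded|].
    intros f Hf0. now apply quasi_complete_inv_locally_lipschitz.
  - intros [Hb Hinv]. apply quasi_complete_of_inv_locally_lipschitz; auto.
    intros f Hf0 Hf. apply Hinv; auto using lipschitz_locally_lipschitz.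
  - intro Hc. split; [now apply quasi_complete_locally_bounded|].
    intros f Hf0 Hf. apply quasi_complete_inv_locally_lipschitz;
      auto using lipschitz_locally_lipschitz.
  - intros [Hb Hinv]. now apply quasi_complete_of_inv_locally_lipschitz.
Qed.
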